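(* Let $G$ be a group with finite generating set $S$. Then $G$ is a torsion group if and only if the skeleton subshift $X_{G,S}$ is aperiodic.
   Context: A group is torsion if every element has finite order. The skeleton subshift $X_{G,S}\subseteq(S\cup S^{-1})^{\mathbb{Z}}$ is the set of bi-infinite sequences none of whose non-empty finite factors $x_ix_{i+1}\cdots x_j$ represents $1_G$. With the shift $\sigma(x)_i=x_{i+1}$, a sequence $x$ is periodic if $\sigma^k(x)=x$ for some $k\neq0$; a set of sequences is aperiodic if it contains no periodic sequence. *)

From Stdlib Require Import ZArith List.
Import ListNotations.
Open Scope Z_scope.

Record is_group (G : Type) (mul : G -> G -> G) (inv : G -> G) (one : G) : Prop := {
  grp_assoc : forall a b c, mul a (mul b c) = mul (mul a b) c;
  grp_id_l : forall a, mul one a = a;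
  grp_id_r : forall a, mul a one = a;
  grp_inv_l : forall a, mul (inv a) a = one;
  grp_inv_r : forall a, mul a (inv a) = one
}.

Definition gprod {G : Type} (mul : G -> G -> G) (one : G) (l : list G) : G :=
  fold_right mul one l.

Definition in_sym {G : Type} (inv : G -> G) (S : list G) (a : G) : Prop :=
  In a S \/ exists s, In s S /\ a = inv s.

Definition generates {G : Type} (mul : G -> G -> G) (inv : G -> G) (one : G)
  (S : list G) : Prop :=
  forall g : G, exists l : list G, Forall (in_sym inv S) l /\ gprod mul one l = g.

Fixpoint gpow {G : Type} (mul : G -> G -> G) (one : G) (g : G) (n : nat) : G :=
  match n with O => one | S m => mul g (gpow mul one g m) end.

Definition torsion {G : Type} (mul : G -> G -> G) (one : G) : Prop :=
  forall g : G, exists n : nat, (0 < n)%nat /\ gpow mul one g n = one.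

(* The factor x_i x_{i+1} ... x_{i+n} (length n+1, i.e. x_i ... x_j with j = i+n). *)
Definition factor {G : Type} (mul : G -> G -> G) (one : G) (x : Z -> G)
  (i : Z) (n : nat) : G :=
  gprod mul one (map (fun k => x (i + Z.of_nat k)) (seq 0 (S n))).

Definition skeleton {G : Type} (mul : G -> G -> G) (inv : G -> G) (one : G)
  (S : list G) (x : Z -> G) : Prop :=
  (forall i : Z, in_sym inv S (x i)) /\
  (forall (i : Z) (n : nat), factor mul one x i n <> one).

Definition shift {A : Type} (x : Z -> A) : Z -> A := fun i => x (i + 1).

Definition periodic {A : Type} (x : Z -> A) : Prop :=
  exists k : Z, k <> 0 /\ forall i : Z, x (i + k) = x i.

Definition aperiodic {A : Type} (X : (Z -> A) -> Prop) : Prop :=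
  ~ exists x, X x /\ periodic x.

From Stdlib Require Import ZArith List Lia Classical Wf_nat.
Import ListNotations.

(* If G is torsion and x in X_{G,S} had a period p > 0, the value g of x_0 ... x_{p-1}
   has some order N, so the factor x_0 ... x_{Np-1}, whose value is g^N, is trivial.
   Conversely, if G is not torsion, take a shortest word w over S ∪ S^{-1} whose value
   has infinite order and let x = w^∞.  Every length-|w| window w' of x is conjugate to w,
   hence of infinite order.  A trivial factor of x would read w'^q u = 1 with w' = u v
   and 1 <= |u| <= |w|; then v = w'^(q+1), so the strictly shorter word v would have
   infinite order. *)

Definition finite_order {G : Type} (mul : G -> G -> G) (one : G) (g : G) : Prop :=
  exists m : nat, (0 < m)%nat /\ gpow mul one g m = one.

Definition letters {A : Type} (x : Z -> A) (i : Z) (n : nat) : list A :=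
  map (fun k => x (i + Z.of_nat k)) (seq 0 n).

Definition word {G : Type} (mul : G -> G -> G) (one : G) (x : Z -> G) (i : Z) (n : nat) : G :=
  gprod mul one (letters x i n).

Definition cyclic_word {A : Type} (d : A) (l : list A) (i : Z) : A :=
  nth (Z.to_nat (i mod Z.of_nat (length l))) l d.

Lemma length_letters {A : Type} (x : Z -> A) (i : Z) (n : nat) :
  length (letters x i n) = n.
Proof. unfold letters. now rewrite length_map, length_seq. Qed.

Lemma Forall_letters {A : Type} (P : A -> Prop) (x : Z -> A) (i : Z) (n : nat) :
  (forall j, P (x j)) -> Forall P (letters x i n).
Proof.
  intros HP. unfold letters. apply Forall_forall. intros a Ha.
  apply in_map_iff in Ha as [k [<- _]]. apply HP.
Qed.

Lemma letters_S {A : Type} (x : Z -> A) (i : Z) (n : nat) :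
  letters x i (S n) = x i :: letters x (i + 1) n.
Proof.
  unfold letters. simpl. rewrite Z.add_0_r. f_equal.
  rewrite <- seq_shift, map_map. apply map_ext. intros k. f_equal. lia.
Qed.

Lemma word_S {G : Type} (mul : G -> G -> G) (one : G) (x : Z -> G) (i : Z) (n : nat) :
  word mul one x i (S n) = mul (x i) (word mul one x (i + 1) n).
Proof. unfold word. now rewrite letters_S. Qed.

Lemma periodic_nat_period {A : Type} (x : Z -> A) :
  periodic x -> exists p : nat, (0 < p)%nat /\ forall i, x (i + Z.of_nat p) = x i.
Proof.
  intros [k [Hk Hper]]. destruct (Z_lt_le_dec 0 k) as [Hpos | Hneg].
  - exists (Z.to_nat k). split; [lia|]. intros i. rewrite Z2Nat.id by lia. apply Hper.
  - exists (Z.to_nat (- k)). split; [lia|]. intros i. rewrite Z2Nat.id by lia.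
    rewrite <- (Hper (i + - k)). f_equal. lia.
Qed.

Lemma cyclic_word_period {A : Type} (d : A) (l : list A) (i : Z) :
  cyclic_word d l (i + Z.of_nat (length l)) = cyclic_word d l i.
Proof.
  unfold cyclic_word. do 2 f_equal.
  replace (i + Z.of_nat (length l)) with (i + 1 * Z.of_nat (length l)) by lia.
  apply Z_mod_plus_full.
Qed.

Lemma periodic_cyclic_word {A : Type} (d : A) (l : list A) :
  l <> [] -> periodic (cyclic_word d l).
Proof.
  intros Hne. exists (Z.of_nat (length l)). split.
  - destruct l; [congruence | simpl; lia].
  - apply cyclic_word_period.
Qed.

Lemma cyclic_word_In {A : Type} (d : A) (l : list A) (i : Z) :
  l <> [] -> In (cyclic_word d l i) l.
Proof.
  intros Hne. apply nth_In.
  assert (Hlen : (0 < length l)%nat) by (destruct l; [congruence | simpl; lia]).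
  pose proof (Z.mod_pos_bound i (Z.of_nat (length l)) ltac:(lia)). lia.
Qed.

Lemma letters_cyclic_word {A : Type} (d : A) (l : list A) :
  letters (cyclic_word d l) 0 (length l) = l.
Proof.
  apply (nth_ext _ _ (cyclic_word d l 0) d); [apply length_letters|].
  intros k Hk. rewrite length_letters in Hk. unfold letters.
  rewrite (map_nth (fun k => cyclic_word d l (0 + Z.of_nat k)) _ 0%nat), seq_nth by exact Hk.
  unfold cyclic_word. simpl. rewrite Z.mod_small by lia. now rewrite Nat2Z.id.
Qed.

Lemma shortest_infinite_order_word {G : Type} (mul : G -> G -> G) (inv : G -> G) (one : G)
  (S : list G) :
  generates mul inv one S -> ~ torsion mul one ->
  exists l, Forall (in_sym inv S) l /\ ~ finite_order mul one (gprod mul one l) /\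
    forall l', Forall (in_sym inv S) l' -> (length l' < length l)%nat ->
      finite_order mul one (gprod mul one l').
Proof.
  intros HS Hnt.
  set (P := fun n => exists l, Forall (in_sym inv S) l /\ length l = n /\
                               ~ finite_order mul one (gprod mul one l)).
  destruct (dec_inh_nat_subset_has_unique_least_element P) as
    [n [[[l [Hl [Hlen Hinf]]] Hleast] _]].
  - intros n. apply classic.
  - apply not_all_ex_not in Hnt as [g Hg]. destruct (HS g) as [l [Hl <-]].
    now exists (length l), l.
  - exists l. repeat split; [exact Hl | exact Hinf |].
    intros l' Hl' Hlt. apply NNPP. intros Hinf'.
    assert (Hle : (n <= length l')%nat) by (apply Hleast; now exists l'). lia.
Qed.

Section Group.

Context {G : Type} {mul : G -> G -> G} {inv : G -> G} {one : G}.
Hypothesis HG : is_group G mul inv one.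

Local Notation assoc := (grp_assoc _ _ _ _ HG).
Local Notation id_l := (grp_id_l _ _ _ _ HG).
Local Notation id_r := (grp_id_r _ _ _ _ HG).

Lemma mul_cancel_l (c u v : G) : mul c u = mul c v -> u = v.
Proof.
  intros H.
  rewrite <- (id_l u), <- (id_l v), <- (grp_inv_l _ _ _ _ HG c), <- !assoc, H.
  reflexivity.
Qed.

Lemma mul_cancel_r (c u v : G) : mul u c = mul v c -> u = v.
Proof.
  intros H.
  rewrite <- (id_r u), <- (id_r v), <- (grp_inv_r _ _ _ _ HG c), !assoc, H.
  reflexivity.
Qed.

Lemma gpow_add (g : G) (a b : nat) :
  gpow mul one g (a + b) = mul (gpow mul one g a) (gpow mul one g b).
Proof.
  induction a as [|a IH]; simpl.
  - now rewrite id_l.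
  - now rewrite IH, assoc.
Qed.

Lemma gpow_mul (g : G) (a b : nat) :
  gpow mul one (gpow mul one g a) b = gpow mul one g (a * b).
Proof.
  induction b as [|b IH]; simpl.
  - now rewrite Nat.mul_0_r.
  - rewrite IH, <- gpow_add. f_equal. lia.
Qed.

Lemma conj_gpow (c h a : G) (m : nat) :
  mul c h = mul a c -> mul c (gpow mul one h m) = mul (gpow mul one a m) c.
Proof.
  intros H. induction m as [|m IH]; simpl.
  - now rewrite id_l, id_r.
  - now rewrite assoc, H, <- assoc, IH, assoc.
Qed.

Lemma finite_order_one : finite_order mul one one.
Proof. exists 1%nat. split; [lia | apply id_l]. Qed.

Lemma finite_order_conj (c h a : G) :
  mul c h = mul a c -> finite_order mul one h <-> finite_order mul one a.
Proof.
  intros H. split; intros [m [Hm E]]; exists m; split; try exact Hm;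
    pose proof (conj_gpow c h a m H) as C.
  - rewrite E, id_r in C. apply (mul_cancel_r c). now rewrite <- C, id_l.
  - rewrite E, id_l in C. apply (mul_cancel_l c). now rewrite C, id_r.
Qed.

Lemma finite_order_gpow_S (g : G) (k : nat) :
  finite_order mul one (gpow mul one g (S k)) -> finite_order mul one g.
Proof.
  intros [m [Hm E]]. exists (S k * m)%nat. split; [nia|].
  now rewrite <- gpow_mul.
Qed.

Lemma word_add (x : Z -> G) (i : Z) (a b : nat) :
  word mul one x i (a + b) = mul (word mul one x i a) (word mul one x (i + Z.of_nat a) b).
Proof.
  revert i. induction a as [|a IH]; intros i; simpl plus.
  - rewrite Z.add_0_r. symmetry. apply id_l.
  - rewrite !word_S, IH, assoc. do 2 f_equal. lia.
Qed.

Section Periodic.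

Variables (x : Z -> G) (n : nat).
Hypothesis Hx : forall i, x (i + Z.of_nat n) = x i.

Lemma word_period_shift (i : Z) (k : nat) :
  word mul one x (i + Z.of_nat n) k = word mul one x i k.
Proof.
  unfold word, letters. f_equal. apply map_ext. intros j.
  rewrite <- (Hx (i + Z.of_nat j)). f_equal. lia.
Qed.

Lemma word_periods (i : Z) (q s : nat) :
  word mul one x i (q * n + s) = mul (gpow mul one (word mul one x i n) q) (word mul one x i s).
Proof.
  induction q as [|q IH]; simpl gpow.
  - symmetry. apply id_l.
  - replace (S q * n + s)%nat with (n + (q * n + s))%nat by lia.
    now rewrite word_add, word_period_shift, IH, assoc.
Qed.

Lemma window_conj (i : Z) (k : nat) :
  mul (word mul one x i n) (word mul one x i k) =
  mul (word mul one x i k) (word mul one x (i + Z.of_nat k) n).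
Proof.
  transitivity (word mul one x i (n + k)).
  - now rewrite word_add, word_period_shift.
  - now rewrite Nat.add_comm, word_add.
Qed.

Lemma finite_order_window_iff (i j : Z) :
  finite_order mul one (word mul one x i n) <-> finite_order mul one (word mul one x j n).
Proof.
  assert (Hconj : forall i k, finite_order mul one (word mul one x i n) <->
                              finite_order mul one (word mul one x (i + Z.of_nat k) n)).
  { intros i' k. symmetry. apply (finite_order_conj (word mul one x i' k)).
    symmetry. apply window_conj. }
  destruct (Z.le_ge_cases i j).
  - replace j with (i + Z.of_nat (Z.to_nat (j - i))) by lia. apply Hconj.
  - replace i with (j + Z.of_nat (Z.to_nat (i - j))) by lia. symmetry. apply Hconj.
Qed.

Lemma word_complement_window_pow (i : Z) (q s : nat) :
  (s <= n)%nat -> word mul one x i (q * n + s) = one ->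
  word mul one x (i + Z.of_nat s) (n - s) = gpow mul one (word mul one x i n) (S q).
Proof.
  intros Hs E. rewrite word_periods in E.
  replace (S q) with (q + 1)%nat by lia. rewrite gpow_add. simpl gpow. rewrite id_r.
  transitivity (mul (mul (gpow mul one (word mul one x i n) q) (word mul one x i s))
                    (word mul one x (i + Z.of_nat s) (n - s))).
  - now rewrite E, id_l.
  - rewrite <- assoc, <- word_add. do 2 f_equal. lia.
Qed.

End Periodic.

Lemma torsion_periodic_factor_one (x : Z -> G) :
  torsion mul one -> periodic x -> exists i m, factor mul one x i m = one.
Proof.
  intros Htor Hper. destruct (periodic_nat_period x Hper) as [p [Hp Hx]].
  destruct (Htor (word mul one x 0 p)) as [N [HN E]].
  exists 0, (N * p - 1)%nat.
  change (word mul one x 0 (S (N * p - 1)) = one).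
  replace (S (N * p - 1)) with (N * p + 0)%nat by nia.
  rewrite (word_periods x p Hx), E. apply id_l.
Qed.

Lemma skeleton_cyclic_word (S : list G) (l : list G) :
  Forall (in_sym inv S) l -> ~ finite_order mul one (gprod mul one l) ->
  (forall l', Forall (in_sym inv S) l' -> (length l' < length l)%nat ->
     finite_order mul one (gprod mul one l')) ->
  skeleton mul inv one S (cyclic_word one l).
Proof.
  intros Hl Hinf Hmin.
  assert (Hne : l <> []) by (intros ->; exact (Hinf finite_order_one)).
  assert (Hn : (0 < length l)%nat) by (destruct l; [congruence | simpl; lia]).
  set (x := cyclic_word one l). set (n := length l) in *.
  assert (Hsym : forall i, in_sym inv S (x i)).
  { intros i. rewrite Forall_forall in Hl. now apply Hl, cyclic_word_In. }
  split; [exact Hsym|]. intros i m Hfac.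
  set (q := (m / n)%nat). set (s := (m mod n + 1)%nat).
  assert (Hs : (s <= n)%nat) by (pose proof (Nat.mod_upper_bound m n); unfold s; lia).
  (* [1 + m] reduces to [S m], the length of [factor mul one x i m]. *)
  assert (Hm : (q * n + s = 1 + m)%nat) by (pose proof (Nat.div_mod m n); unfold q, s; nia).
  apply Hinf. rewrite <- (letters_cyclic_word one l).
  change (finite_order mul one (word mul one x 0 n)).
  apply (finite_order_window_iff x n (cyclic_word_period one l) i).
  apply (finite_order_gpow_S _ q).
  rewrite <- (word_complement_window_pow x n (cyclic_word_period one l) i q s Hs)
    by (rewrite Hm; exact Hfac).
  apply Hmin; [apply Forall_letters, Hsym | rewrite length_letters; lia].
Qed.

End Group.

Theorem proposition9 (G : Type) (mul : G -> G -> G) (inv : G -> G) (one : G)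
  (HG : is_group G mul inv one) (S : list G) (HS : generates mul inv one S) :
  torsion mul one <-> aperiodic (skeleton mul inv one S).
Proof.
  split.
  - intros Htor [x [[_ Hnf] Hper]].
    destruct (torsion_periodic_factor_one HG x Htor Hper) as [i [m E]].
    exact (Hnf i m E).
  - intros Hap. apply NNPP. intros Hnt.
    destruct (shortest_infinite_order_word mul inv one S HS Hnt) as [l [Hl [Hinf Hmin]]].
    assert (Hne : l <> []) by (intros ->; exact (Hinf (finite_order_one HG))).
    apply Hap. exists (cyclic_word one l). split.
    + exact (skeleton_cyclic_word HG S l Hl Hinf Hmin).
    + now apply periodic_cyclic_word.
Qed.
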